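(* Let $R$ be a quotient root system with positive roots $R^+$, let $\Phi\subseteq R^+$ be an inversion set, and let $\Phi = \Phi_1 \sqcup \cdots \sqcup \Phi_r$ where $\Phi_1,\dots,\Phi_r$ are non-empty pairwise disjoint inversion sets. Then for each $1 \leq k \leq r$, the set $\Phi_1 \sqcup \cdots \sqcup \Phi_k$ is an inversion set.
   Context: A quotient root system (QRS) $R$ is the set of non-zero images of a root system $\Delta$ (with base $\Sigma$) under the orthogonal projection of its ambient Euclidean space onto $(\mathrm{span}\,J)^\perp$ for some $J\subsetneq\Sigma$; its base consists of the images of $\Sigma\setminus J$, and every root is an integer combination of the base with all coefficients $\ge0$ (positive roots, $R^+$) or all $\le0$. A subset $\Phi\subseteq R^+$ is closed if $\alpha,\beta\in\Phi$ and $\alpha+\beta\in R$ imply $\alpha+\beta\in\Phi$; co-closed if its complement $R^+\setminus\Phi$ is closed; an inversion set if it is both closed and co-closed. *)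

From HB Require Import structures.
From mathcomp Require Import all_boot all_order all_algebra.
From mathcomp Require Import reals.
Set Implicit Arguments. Unset Strict Implicit. Unset Printing Implicit Defensive.
Import Order.TTheory GRing.Theory Num.Theory.
Local Open Scope ring_scope.

Section QRS.
Variables (R : realType) (n : nat).
Local Notation V := 'rV[R]_n.

Definition dot (u v : V) : R := (u *m v^T) 0 0.

Definition refl (a v : V) : V := v - ((2 * dot v a) / dot a a) *: a.

(* Delta (given as a duplicate-free list) is a (reduced, crystallographic) root system in R^n *)
Definition is_root_system (D : seq V) : Prop :=
  [/\ [/\ uniq D, (0 : V) \notin D & (<<D>>%VS = fullv)],
      (forall a b, a \in D -> b \in D -> refl a b \in D),
      (forall a b, a \in D -> b \in D ->
          exists z : int, (2 * dot b a) / dot a a = z%:~R) &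
      (forall a (c : R), a \in D -> c *: a \in D -> c = 1 \/ c = -1)].

Definition is_base (D Sig : seq V) : Prop :=
  [/\ {subset Sig <= D}, free Sig &
      forall a, a \in D -> exists c : 'I_(size Sig) -> int,
        a = \sum_(i < size Sig) (c i)%:~R *: Sig`_i /\
        ((forall i, 0 <= c i) \/ (forall i, c i <= 0))].

Definition qrs_proper_sub (J Sig : seq V) : Prop :=
  {subset J <= Sig} /\ exists2 s, s \in Sig & s \notin J.

Definition is_proj (J : seq V) (a x : V) : Prop :=
  (a - x \in <<J>>%VS) /\ (forall j, j \in J -> dot x j = 0).

(* the quotient root system R: non-zero images of roots *)
Definition inQRS (D J : seq V) (x : V) : Prop :=
  x != 0 /\ exists2 a, a \in D & is_proj J a x.

(* positive roots R^+: roots that are non-negative integer combinations of the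
   base of R, i.e. of the images of Sig \ J *)
Definition inQRSpos (D Sig J : seq V) (x : V) : Prop :=
  inQRS D J x /\
  exists c : 'I_(size Sig) -> nat,
    is_proj J (\sum_(i < size Sig | Sig`_i \notin J) (c i)%:R *: Sig`_i) x.

Definition closed_set (D Sig J : seq V) (P : V -> Prop) : Prop :=
  (forall x, P x -> inQRSpos D Sig J x) /\
  (forall a b, P a -> P b -> inQRS D J (a + b) -> P (a + b)).

Definition coclosed_set (D Sig J : seq V) (P : V -> Prop) : Prop :=
  (forall x, P x -> inQRSpos D Sig J x) /\
  closed_set D Sig J (fun x => inQRSpos D Sig J x /\ ~ P x).

Definition inversion_set (D Sig J : seq V) (P : V -> Prop) : Prop :=
  closed_set D Sig J P /\ coclosed_set D Sig J P.

End QRS.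

(* A sum a + b of roots from Phi_1, ..., Phi_k that is a root lies in Phi, hence
   in some Phi_m; if m > k then a and b lie outside Phi_m, and co-closedness of
   Phi_m keeps a + b outside Phi_m, a contradiction.  Co-closedness of the union
   holds because the intersection of the closed complements is closed. *)
From HB Require Import structures.
From mathcomp Require Import all_boot all_order all_algebra.
From mathcomp Require Import reals.
Import Order.TTheory GRing.Theory Num.Theory.
Local Open Scope ring_scope.

Section UnionsOfInversionSets.
Variables (R : realType) (n : nat) (D Sig J : seq 'rV[R]_n).
Variables (T : Type) (Phis : T -> 'rV[R]_n -> Prop).

Lemma coclosed_set_bigcup (I : T -> Prop) :
  (exists i, I i) -> (forall i, I i -> coclosed_set D Sig J (Phis i)) ->
  coclosed_set D Sig J (fun x => exists2 i, I i & Phis i x).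
Proof.
move=> [i0 Ii0] coPhis; split; first by move=> x [i Ii /(coPhis i Ii).1].
split=> [x [] //|a b [a_pos a_out] [b_pos b_out] ab_root].
have out_of i : I i -> inQRSpos D Sig J (a + b) /\ ~ Phis i (a + b).
  move=> Ii; have [_ [_ sumC]] := coPhis i Ii.
  by apply: sumC ab_root; split=> // ?; [apply: a_out | apply: b_out]; exists i.
by split; [exact: (out_of i0 Ii0).1 | move=> [i Ii]; apply: (out_of i Ii).2].
Qed.

Lemma closed_set_sub_bigcup (Phi : 'rV[R]_n -> Prop) (I K : pred T) :
  closed_set D Sig J Phi ->
  (forall x, Phi x <-> exists2 i, K i & Phis i x) ->
  (forall i, I i -> K i) ->
  (forall i, K i -> coclosed_set D Sig J (Phis i)) ->
  (forall i j x, K i -> K j -> i <> j -> Phis i x -> Phis j x -> False) ->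
  closed_set D Sig J (fun x => exists2 i, I i & Phis i x).
Proof.
move=> [_ PhiC] PhiE subIK coPhis disj; split.
  by move=> x [i /subIK Ki /(coPhis i Ki).1].
move=> a b [i Ii a_in] [j Ij b_in] ab_root.
have [m Km m_in] : exists2 m, K m & Phis m (a + b).
  by apply/PhiE/PhiC => //; apply/PhiE; [exists i | exists j]; rewrite ?subIK.
have [Im | nIm] := boolP (I m); first by exists m.
have [_ [_ sumC]] := coPhis m Km.
have pos_out l x : I l -> Phis l x -> inQRSpos D Sig J x /\ ~ Phis m x.
  move=> Il in_l; split; first exact: (coPhis l (subIK l Il)).1.
  move=> in_m; apply: (disj l m x) => //; first exact: subIK.
  by move=> eq_lm; rewrite -eq_lm Il in nIm.
by have [_] := sumC a b (pos_out i a Ii a_in) (pos_out j b Ij b_in) ab_root.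
Qed.

End UnionsOfInversionSets.

Theorem proposition1p7 (R : realType) (n : nat) (D Sig J : seq 'rV[R]_n)
    (Phi : 'rV[R]_n -> Prop) (r : nat) (Phis : nat -> 'rV[R]_n -> Prop) :
  is_root_system D -> is_base D Sig -> qrs_proper_sub J Sig ->
  inversion_set D Sig J Phi ->
  (forall i, (i < r)%N -> inversion_set D Sig J (Phis i)) ->
  (forall i, (i < r)%N -> exists x, Phis i x) ->
  (forall i j x, (i < r)%N -> (j < r)%N -> i <> j -> Phis i x -> Phis j x -> False) ->
  (forall x, Phi x <-> exists2 i, (i < r)%N & Phis i x) ->
  forall k, (1 <= k <= r)%N ->
    inversion_set D Sig J (fun x => exists2 i, (i < k)%N & Phis i x).
Proof.
move=> _ _ _ [PhiC _] invPhis _ disj PhiE k /andP[k_gt0 k_le_r].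
have k_sub_r i : (i < k)%N -> (i < r)%N by move/leq_trans; apply.
have coPhis i : (i < r)%N -> coclosed_set D Sig J (Phis i).
  by move=> /invPhis[].
split.
  exact: (@closed_set_sub_bigcup _ _ _ _ _ _ _ _ (gtn k) (gtn r)
           PhiC PhiE k_sub_r coPhis disj).
by apply: coclosed_set_bigcup => [|i /k_sub_r/coPhis //]; exists 0%N.
Qed.
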